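(* Let $\beta = (\nu_{1}, \dots, \nu_{n}, \nu_{n}, \dots, \nu_{1}) \in \Lambda_{2n}$ have at least one negative part. Then $\mathrm{meas}(Kp^{\lambda}Kg_{\mu} \cap K'p^{\beta}K') = 0$, the measure being taken in $H$.
   Context: Let $p$ be an odd prime and $a$ prime to $p$ and not a square mod $p$. $G=Gl_{2n}(\mathbb{Q}_p)$, $K=Gl_{2n}(\mathbb{Z}_p)$, and $H\cong Gl_n(\mathbb{Q}_p(\sqrt a))$ is embedded in $G$ as $\{\left(\begin{smallmatrix} i & j\\ a w_n j w_n & w_n i w_n\end{smallmatrix}\right)\in G: i,j\in Gl_n(\mathbb{Q}_p)\}$, where $w_n$ is the $n\times n$ matrix with ones on the antidiagonal; $K'=K\cap H\cong Gl_n(\mathbb{Z}_p(\sqrt a))$. $\lambda$ is a partition with $l(\lambda)\le 2n$, $\mu$ a partition with $l(\mu)\le n$, $p^\lambda=\mathrm{diag}(p^{\lambda_1},\dots,p^{\lambda_{2n}})$ (similarly $p^\beta$), $g_\mu=\mathrm{diag}(1,\dots,1,p^{-\mu_n},\dots,p^{-\mu_1})$, and $\Lambda_{2n}=\{(\beta_1,\dots,\beta_{2n})\in\mathbb{Z}^{2n}:\beta_1\ge\cdots\ge\beta_{2n}\}$. The measure is the Haar measure on $H$ normalized so $K'$ has measure 1. *)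

From HB Require Import structures.
From mathcomp Require Import all_boot all_order all_algebra.
Set Implicit Arguments. Unset Strict Implicit. Unset Printing Implicit Defensive.
Import Order.TTheory GRing.Theory Num.Theory.
Local Open Scope ring_scope.

(* [ord] is the (normalized) valuation, meaningful on nonzero elements.  *)
(* [val_ge ord x k] means  x = 0  or  v(x) >= k  (i.e. x \in p^k Z_p).   *)
Definition val_ge (F : fieldType) (ord : F -> int) (x : F) (k : int) : bool :=
  (x == 0) || (k <= ord x).

(* F, with valuation ord, is (a model of) the p-adic field Q_p: a complete
   discretely valued field with v(p) = 1 in which Q is dense.  Any such
   valued field is isomorphic to the completion Q_p of Q. *)
Record is_Qp (p : nat) (F : fieldType) (ord : F -> int) : Prop := IsQp {
  Qp_ord_mul : forall x y : F, x != 0 -> y != 0 -> ord (x * y) = ord x + ord y;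
  Qp_ord_add : forall x y : F, x != 0 -> y != 0 -> x + y != 0 ->
                 Num.min (ord x) (ord y) <= ord (x + y);
  Qp_p_neq0 : (p%:R : F) != 0;
  Qp_ord_p : ord (p%:R) = 1;
  Qp_complete : forall u : nat -> F,
      (forall k : int, exists N : nat, forall m n : nat, (N <= m)%N -> (N <= n)%N ->
          val_ge ord (u m - u n) k) ->
      exists l : F, forall k : int, exists N : nat, forall n : nat, (N <= n)%N ->
          val_ge ord (u n - l) k;
  Qp_dense : forall (x : F) (k : int), exists q : rat, val_ge ord (x - ratr q) k
}.

(* K = GL_m(Z_p): invertible matrices with Z_p entries and Z_p-integral inverse *)
Definition inK (F : fieldType) (ord : F -> int) (m : nat) (A : 'M[F]_m) : Prop :=
  A \in unitmx /\ (forall i j, val_ge ord (A i j) 0) /\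
  (forall i j, val_ge ord (invmx A i j) 0).

Definition wmx (F : fieldType) (n : nat) : 'M[F]_n :=
  \matrix_(i < n, j < n) ((i + j)%N == n.-1)%:R.

(* H: the image of GL_n(Q_p(sqrt a)) in GL_{2n}(Q_p) *)
Definition inH (F : fieldType) (a : int) (n : nat) (X : 'M[F]_(n + n)) : Prop :=
  X \in unitmx /\
  exists i j : 'M[F]_n,
    X = block_mx i j (a%:~R *: (wmx F n *m j *m wmx F n)) (wmx F n *m i *m wmx F n).

Definition p_pow_nat (F : fieldType) (p m : nat) (l : 'I_m -> nat) : 'M[F]_m :=
  diag_mx (\row_i ((p%:R : F) ^+ l i)).

Definition p_pow_int (F : fieldType) (p m : nat) (b : 'I_m -> int) : 'M[F]_m :=
  diag_mx (\row_i ((p%:R : F) ^ b i)).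

(* g_mu = diag(1,...,1,p^{-mu_n},...,p^{-mu_1}) ; mu is 0-indexed *)
Definition g_mu (F : fieldType) (p n : nat) (mu : 'I_n -> nat) : 'M[F]_(n + n) :=
  diag_mx (\row_(i < n + n)
     match split i with
     | inl _ => 1
     | inr k => (p%:R : F) ^- mu (rev_ord k)
     end).

Definition beta_of (n : nat) (nu : 'I_n -> int) : 'I_(n + n) -> int :=
  fun i => match split i with
           | inl k => nu k
           | inr k => nu (rev_ord k)
           end.

(* nonincreasing sequences: partitions (nat) and elements of Lambda_m (int) *)
Definition nonincr_nat (m : nat) (f : 'I_m -> nat) : Prop :=
  forall i j : 'I_m, (i <= j)%N -> (f j <= f i)%N.
Definition nonincr_int (m : nat) (f : 'I_m -> int) : Prop :=
  forall i j : 'I_m, (i <= j)%N -> f j <= f i.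

Definition in_KlamKg (F : fieldType) (ord : F -> int) (p n : nat)
    (lam : 'I_(n + n) -> nat) (mu : 'I_n -> nat) (X : 'M[F]_(n + n)) : Prop :=
  exists k1 k2 : 'M[F]_(n + n), inK ord k1 /\ inK ord k2 /\
    X = k1 *m p_pow_nat F p lam *m k2 *m g_mu F p mu.

Definition in_K'betaK' (F : fieldType) (ord : F -> int) (p : nat) (a : int) (n : nat)
    (b : 'I_(n + n) -> int) (X : 'M[F]_(n + n)) : Prop :=
  exists k1 k2 : 'M[F]_(n + n),
    (inK ord k1 /\ inH a k1) /\ (inK ord k2 /\ inH a k2) /\
    X = k1 *m p_pow_int F p b *m k2.

Arguments is_Qp p F ord : clear implicits.

From HB Require Import structures.
From mathcomp Require Import all_boot all_order all_algebra.
From mathcomp Require Import zify.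
Set Implicit Arguments. Unset Strict Implicit. Unset Printing Implicit Defensive.
Import Order.TTheory GRing.Theory Num.Theory.
Local Open Scope ring_scope.

(* The intersection is in fact empty.  Right multiplication by g_mu fixes the
   first n columns, so an X in K p^lambda K g_mu has integral first n columns.
   An element of H is determined by its first n columns (the other blocks are
   j and w i w, while the first column block holds i and a w j w with a a
   p-adic unit), so such an X in H is integral.  Then p^beta = k1^-1 X k2^-1
   would be integral for k1, k2 in K', which fails when some nu_i < 0. *)

Section Valuation.
Variables (p : nat) (F : fieldType) (ord : F -> int).
Hypothesis HQ : is_Qp p F ord.

Lemma val_ge0 k : val_ge ord 0 k.
Proof. by rewrite /val_ge eqxx. Qed.

Lemma val_geD x y k : val_ge ord x k -> val_ge ord y k -> val_ge ord (x + y) k.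
Proof.
rewrite /val_ge; have [->|x0] := eqVneq x 0; first by rewrite add0r.
have [->|y0] := eqVneq y 0; first by rewrite addr0 (negbTE x0) => h _.
have [->|s0] := eqVneq (x + y) 0; first by [].
move=> /= hx hy; apply: le_trans (Qp_ord_add HQ x0 y0 s0).
by rewrite le_min hx.
Qed.

Lemma val_geM x y k l :
  val_ge ord x k -> val_ge ord y l -> val_ge ord (x * y) (k + l).
Proof.
rewrite /val_ge; have [->|x0] := eqVneq x 0; first by rewrite mul0r eqxx.
have [->|y0] := eqVneq y 0; first by rewrite mulr0 eqxx.
rewrite /= mulf_eq0 (negbTE x0) (negbTE y0) /= (Qp_ord_mul HQ x0 y0).
exact: lerD.
Qed.

Lemma val_geM0 x y : val_ge ord x 0 -> val_ge ord y 0 -> val_ge ord (x * y) 0.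
Proof. by move=> hx hy; rewrite -[0]addr0; apply: val_geM. Qed.

Lemma ord1 : ord 1 = 0.
Proof.
have := Qp_ord_mul HQ (oner_neq0 F) (oner_neq0 F).
by rewrite mulr1; set t := ord 1; lia.
Qed.

Lemma ordN1 : ord (-1) = 0.
Proof.
have N1_neq0 : (-1 : F) != 0 by rewrite oppr_eq0 oner_neq0.
have := Qp_ord_mul HQ N1_neq0 N1_neq0.
by rewrite mulrNN mulr1 ord1; set t := ord (-1); lia.
Qed.

Lemma val_ge_nat m : val_ge ord m%:R 0.
Proof.
elim: m => [|m IH]; first exact: val_ge0.
by rewrite -addn1 natrD; apply: val_geD IH _; rewrite /val_ge ord1 orbT.
Qed.

Lemma val_ge_int z : val_ge ord z%:~R 0.
Proof.
case: z => m; first exact: val_ge_nat.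
rewrite NegzE mulrNz -mulN1r; apply: val_geM0; last exact: val_ge_nat.
by rewrite /val_ge ordN1 orbT.
Qed.

Lemma ord_pexp k : (p%:R : F) ^+ k != 0 /\ ord ((p%:R : F) ^+ k) = k%:Z.
Proof.
have p0 := Qp_p_neq0 HQ.
elim: k => [|k [pk0 IH]]; first by rewrite expr0 oner_neq0 ord1.
rewrite exprS mulf_neq0 //; split => //.
by rewrite (Qp_ord_mul HQ p0 pk0) IH (Qp_ord_p HQ); lia.
Qed.

Lemma val_ge_expz_lt0 z : z < 0 -> ~~ val_ge ord ((p%:R : F) ^ z) 0.
Proof.
case: z => // k _ /=; have [pk0 ordpk] := ord_pexp k.+1.
have pkV0 : ((p%:R : F) ^+ k.+1)^-1 != 0 by rewrite invr_eq0.
have := Qp_ord_mul HQ pkV0 pk0; rewrite mulVf // ord1 ordpk.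
rewrite /val_ge (negbTE pkV0) /= -ltNge.
by set t := ord _; lia.
Qed.

(* Bezout: if [val_ge ord a 1] then [1 = u a + v p] would have positive valuation. *)
Lemma ord_intr_coprime (a : int) :
  coprime `|a| p -> (a%:~R : F) != 0 /\ ord a%:~R = 0.
Proof.
move=> cop; have /coprimezP[[u v] /= huv] : coprimez a p%:Z by [].
have a_nonunit : ~~ val_ge ord (a%:~R : F) 1.
  apply/negP=> ha; have : val_ge ord (1 : F) 1.
    have -> : (1 : F) = (u * a + v * p%:Z)%:~R by rewrite huv.
    rewrite intrD !intrM.
    have p1 : val_ge ord (p%:Z%:~R : F) 1 by rewrite /val_ge /= (Qp_ord_p HQ) orbT.
    apply: val_geD; first by have := val_geM (val_ge_int u) ha; rewrite add0r.
    by have := val_geM (val_ge_int v) p1; rewrite add0r.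
  by rewrite /val_ge oner_eq0 ord1.
move: a_nonunit (val_ge_int a); rewrite /val_ge negb_or -ltNge => /andP[a0 lt1].
by rewrite (negbTE a0) /=; split=> //; lia.
Qed.

Lemma val_ge_unitMl c x :
  c != 0 -> ord c = 0 -> val_ge ord (c * x) 0 -> val_ge ord x 0.
Proof.
move=> c0 oc; rewrite /val_ge; have [//|x0] := eqVneq x 0.
by rewrite mulf_eq0 (negbTE c0) (negbTE x0) /= (Qp_ord_mul HQ c0 x0) oc add0r.
Qed.

Definition intmx m r (A : 'M[F]_(m, r)) := forall i j, val_ge ord (A i j) 0.

Lemma intmx_mul m r s (A : 'M[F]_(m, r)) (B : 'M[F]_(r, s)) :
  intmx A -> intmx B -> intmx (A *m B).
Proof.
move=> hA hB i j; rewrite mxE.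
apply: (big_ind (fun x => val_ge ord x 0)); first exact: val_ge0.
  by move=> x y; apply: val_geD.
by move=> k _; apply: val_geM0.
Qed.

Lemma intmx_KAK m (k1 k2 A : 'M[F]_m) :
  inK ord k1 -> inK ord k2 -> intmx (k1 *m A *m k2) <-> intmx A.
Proof.
move=> [k1U [k1int k1Vint]] [k2U [k2int k2Vint]]; split=> hA.
  have -> : A = invmx k1 *m (k1 *m A *m k2) *m invmx k2.
    by rewrite -!mulmxA mulmxV // mulmx1 !mulmxA mulVmx // mul1mx.
  by apply: intmx_mul k2Vint; apply: intmx_mul k1Vint hA.
by apply: intmx_mul k2int; apply: intmx_mul k1int hA.
Qed.

Lemma intmx_p_pow_nat m (l : 'I_m -> nat) : intmx (p_pow_nat F p l).
Proof.
move=> i j; rewrite !mxE; case: eqP => _; last exact: val_ge0.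
by rewrite mulr1n -natrX; apply: val_ge_nat.
Qed.

Lemma intmx_p_pow_int_ge0 m (b : 'I_m -> int) :
  intmx (p_pow_int F p b) -> forall i, 0 <= b i.
Proof.
move=> hP i; rewrite leNgt; apply/negP => /val_ge_expz_lt0/negP; apply.
by have := hP i i; rewrite !mxE eqxx mulr1n.
Qed.

End Valuation.

Lemma wmx_mulmx (F : fieldType) n m (A : 'M[F]_(n, m)) i j :
  (wmx F n *m A) i j = A (rev_ord i) j.
Proof.
rewrite mxE (bigD1 (rev_ord i)) //= big1 => [|k /negbTE ki].
  by rewrite mxE /= (_ : _ == _) ?mul1r ?addr0 //; apply/eqP; have := ltn_ord i; lia.
rewrite mxE; case: eqP => [h|]; last by rewrite mul0r.
by move: ki; rewrite (_ : k == _) //; apply/eqP/val_inj => /=; have := ltn_ord i; lia.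
Qed.

Lemma mulmx_wmx (F : fieldType) n m (A : 'M[F]_(m, n)) i j :
  (A *m wmx F n) i j = A i (rev_ord j).
Proof.
rewrite mxE (bigD1 (rev_ord j)) //= big1 => [|k /negbTE kj].
  by rewrite mxE /= (_ : _ == _) ?mulr1 ?addr0 //; apply/eqP; have := ltn_ord j; lia.
rewrite mxE; case: eqP => [h|]; last by rewrite mulr0.
by move: kj; rewrite (_ : k == _) //; apply/eqP/val_inj => /=; have := ltn_ord j; lia.
Qed.

Lemma mulmx_wmxK (F : fieldType) n m (A : 'M[F]_(m, n)) :
  A *m wmx F n *m wmx F n = A.
Proof. by apply/matrixP=> i j; rewrite !mulmx_wmx rev_ordK. Qed.

Lemma wmx_conjE (F : fieldType) n (A : 'M[F]_n) i j :
  (wmx F n *m A *m wmx F n) i j = A (rev_ord i) (rev_ord j).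
Proof. by rewrite mulmx_wmx wmx_mulmx. Qed.

Definition Hmx (F : fieldType) n (c : F) (i j : 'M[F]_n) : 'M[F]_(n + n) :=
  block_mx i j (c *: (wmx F n *m j *m wmx F n)) (wmx F n *m i *m wmx F n).

Lemma Hmx_mul (F : fieldType) n (c : F) (i j i' j' : 'M[F]_n) :
  Hmx c i j *m Hmx c i' j' =
  Hmx c (i *m i' + c *: (j *m wmx F n *m j' *m wmx F n))
        (i *m j' + j *m wmx F n *m i' *m wmx F n).
Proof.
rewrite /Hmx mulmx_block; congr block_mx;
  do ![rewrite mulmxA | rewrite -scalemxAr | rewrite -scalemxAl
      | rewrite mulmx_wmxK | rewrite mulmxDl | rewrite mulmxDr | rewrite scalerDr] => //;
  exact: addrC.
Qed.

Lemma p_pow_int_beta_Hmx (F : fieldType) p n (c : F) (nu : 'I_n -> int) :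
  p_pow_int F p (beta_of nu) = Hmx c (diag_mx (\row_k ((p%:R : F) ^ nu k))) 0.
Proof.
rewrite /Hmx mulmx0 mul0mx scaler0.
have -> : wmx F n *m diag_mx (\row_k ((p%:R : F) ^ nu k)) *m wmx F n =
          diag_mx (\row_k ((p%:R : F) ^ nu (rev_ord k))).
  apply/matrixP=> i j; rewrite wmx_conjE !mxE (inj_eq rev_ord_inj).
  by case: eqP => [->|]; rewrite ?rev_ordK.
rewrite -diag_mx_row /p_pow_int; congr diag_mx; apply/rowP => k.
by rewrite !mxE /beta_of; case: split => l; rewrite mxE.
Qed.

Lemma K'betaK'_Hmx (F : fieldType) (ord : F -> int) p (a : int) n
    (nu : 'I_n -> int) (X : 'M[F]_(n + n)) :
  in_K'betaK' ord p a (beta_of nu) X -> exists i j, X = Hmx a%:~R i j.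
Proof.
move=> [k1 [k2 [[_ [_ [i1 [j1 ->]]]] [[_ [_ [i2 [j2 ->]]]] ->]]]].
by rewrite (p_pow_int_beta_Hmx _ a%:~R) !Hmx_mul; do 2!eexists.
Qed.

Lemma Hmx_intmx_of_lcol (F : fieldType) (ord : F -> int) p n (c : F) (i j : 'M[F]_n) :
  is_Qp p F ord -> c != 0 -> ord c = 0 ->
  (forall r s, val_ge ord (Hmx c i j r (lshift n s)) 0) -> intmx ord (Hmx c i j).
Proof.
move=> HQ c0 oc hl.
have hi r s : val_ge ord (i r s) 0 by have := hl (lshift n r) s; rewrite block_mxEul.
have hj r s : val_ge ord (j r s) 0.
  apply: (val_ge_unitMl HQ c0 oc).
  have := hl (rshift n (rev_ord r)) (rev_ord s).
  by rewrite block_mxEdl mxE wmx_conjE !rev_ordK.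
have hc : val_ge ord c 0 by rewrite /val_ge oc orbT.
move=> r s; rewrite /Hmx -(splitK r) -(splitK s).
case: (split r) => r'; case: (split s) => s';
  rewrite ?block_mxEul ?block_mxEur ?block_mxEdl ?block_mxEdr ?wmx_conjE //.
rewrite [X in val_ge _ X _]mxE wmx_conjE.
exact: (val_geM0 HQ hc (hj (rev_ord r') (rev_ord s'))).
Qed.

Lemma mulmx_g_mu_lshift (F : fieldType) p n (mu : 'I_n -> nat)
    (A : 'M[F]_(n + n)) i s :
  (A *m g_mu F p mu) i (lshift n s) = A i (lshift n s).
Proof.
by rewrite mul_mx_diag !mxE -[lshift n s]/(unsplit (inl s)) unsplitK mulr1.
Qed.

Theorem lemma4p1 (p : nat) (a : int) (n : nat) (F : fieldType) (ord : F -> int)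
  (Hp : prime p) (Hodd : odd p) (HQp : is_Qp p F ord)
  (Ha_coprime : ~~ (p %| `|a|)%N)
  (Ha_nonsq : forall x : int, ~ (x ^+ 2 = a %[mod p%:Z])%Z)
  (lam : 'I_(n + n) -> nat) (Hlam : nonincr_nat lam)
  (mu : 'I_n -> nat) (Hmu : nonincr_nat mu)
  (nu : 'I_n -> int) (Hnu : nonincr_int nu) (Hneg : exists i, nu i < 0) :
  ~ (exists X : 'M[F]_(n + n),
       in_KlamKg ord p lam mu X /\ in_K'betaK' ord p a (beta_of nu) X).
Proof.
move=> [X [[k1 [k2 [hk1 [hk2 eX]]]] XK'K']].
have [a0 orda] : (a%:~R : F) != 0 /\ ord a%:~R = 0.
  by apply: (ord_intr_coprime HQp); rewrite coprime_sym prime_coprime.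
have M_int : intmx ord (k1 *m p_pow_nat F p lam *m k2).
  exact/(intmx_KAK HQp _ hk1 hk2).2/intmx_p_pow_nat.
have X_int : intmx ord X.
  have [i [j eXH]] := K'betaK'_Hmx XK'K'.
  rewrite eXH; apply: (Hmx_intmx_of_lcol HQp a0 orda) => r s.
  by rewrite -eXH eX mulmx_g_mu_lshift; apply: M_int.
move: XK'K' => [k1' [k2' [[hk1' _] [[hk2' _] eX']]]].
have P_int : intmx ord (p_pow_int F p (beta_of nu)).
  by apply/(intmx_KAK HQp _ hk1' hk2'); rewrite -eX'.
case: Hneg => i0; apply/negP; rewrite -leNgt.
have := intmx_p_pow_int_ge0 HQp P_int (lshift n i0).
by rewrite /beta_of -[lshift n i0]/(unsplit (inl i0)) unsplitK.
Qed.
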